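(* Let $\alpha,\beta\in\{-1,0,1\}$, and let $\tilde{C}\in\{0,1\}^{\tilde{K}\times n}$ and $\hat{C}\in\{0,1\}^{\hat{K}\times n}$ be cost matrices of two ordinal objectives on the same $n$ elements. Then the matrix \[ A=\begin{pmatrix}\alpha\,\tilde{C}\\ \mathbf{1}^\top\\ \beta\,\hat{C}\end{pmatrix}, \] where $\mathbf{1}\in\mathbb{R}^n$ is the all-ones vector, is totally unimodular.
   Context: An ordinal objective on $n$ elements with $K$ categories $\eta_1\prec\dots\prec\eta_K$ is given by an assignment $o:\{1,\dots,n\}\to\{\eta_1,\dots,\eta_K\}$; its cost matrix $C\in\{0,1\}^{K\times n}$ has $C_{ji}=1$ if $j\le k$ where $o(i)=\eta_k$, and $C_{ji}=0$ otherwise. $\tilde{C}$ and $\hat{C}$ are such matrices for assignments $\tilde{o}$ (with $\tilde{K}$ categories) and $\hat{o}$ (with $\hat{K}$ categories). A matrix is totally unimodular if every square submatrix has determinant in $\{-1,0,1\}$. *)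

From mathcomp Require Import all_boot all_order all_algebra.
Set Implicit Arguments. Unset Strict Implicit. Unset Printing Implicit Defensive.
Import Order.TTheory GRing.Theory Num.Theory.
Local Open Scope ring_scope.

(* An ordinal objective on n elements with K categories eta_1 < ... < eta_K:
   categories are represented by 'I_K (index k-1 for eta_k), and the
   assignment is o : 'I_n -> 'I_K.  The cost matrix C in {0,1}^{K x n} has
   C j i = 1 iff j <= k where o i = eta_k, i.e. (0-indexed) iff j <= o i. *)
Definition cost_matrix (n K : nat) (o : 'I_n -> 'I_K) : 'M[int]_(K, n) :=
  \matrix_(j < K, i < n) (if (j <= o i)%N then 1 else 0).

Definition totally_unimodular (m p : nat) (A : 'M[int]_(m, p)) : Prop :=
  forall (k : nat) (f : 'I_k -> 'I_m) (g : 'I_k -> 'I_p),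
    injective f -> injective g ->
    \det (\matrix_(a < k, b < k) A (f a) (g b)) \in [:: -1; 0; 1].

Definition stacked_matrix (n Kt Kh : nat) (alpha beta : int)
  (Ct : 'M[int]_(Kt, n)) (Ch : 'M[int]_(Kh, n)) : 'M[int]_(Kt + (1 + Kh), n) :=
  col_mx (alpha *: Ct) (col_mx (const_mx 1) (beta *: Ch)).

From mathcomp Require Import all_boot all_order all_algebra.
From mathcomp Require Import zify.
Set Implicit Arguments. Unset Strict Implicit. Unset Printing Implicit Defensive.
Import Order.TTheory GRing.Theory Num.Theory.
Local Open Scope ring_scope.

(* Listing the rows of alpha C~ in reverse order, column i of the stacked
   matrix is supported on the consecutive rows from the ot i-th row of C~ up
   to the oh i-th row of C^, through the row of ones: up to scaling each row by
   alpha, 1 or beta, it is an interval matrix.  Interval matrices are totally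
   unimodular: in a square one, take the lowest row r0 and, among the columns
   meeting it, the interval c0 ending first; subtracting column c0 from the
   other columns meeting r0 shortens their intervals so that they start where
   c0 ends, leaves the determinant unchanged, and leaves a single 1 in row r0,
   whose minor is again an interval matrix. *)

Local Notation signs := ([:: -1; 0; 1] : seq int).

Lemma signsM (x y : int) : x \in signs -> y \in signs -> x * y \in signs.
Proof. by rewrite !inE => /or3P[]/eqP-> /or3P[]/eqP->. Qed.

Lemma signs_sign (n : nat) : (-1) ^+ n \in signs.
Proof. by rewrite -signr_odd; case: odd. Qed.

Lemma det_1_sub_row_supported (R : comPzRingType) k (c : 'I_k) (N : 'M[R]_k) :
  (forall i j, i != c -> N i j = 0) -> N c c = 0 -> \det (1%:M - N) = 1.
Proof.
move=> N_row N_cc.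
rewrite (expand_det_col _ c) (bigD1 c) //= big1 => [|i ic]; last first.
  by rewrite !mxE (negPf ic) N_row // subr0 mul0r.
rewrite !mxE eqxx N_cc subr0 mul1r addr0 /cofactor addnn -signr_odd odd_double.
suff -> : row' c (col' c (1%:M - N)) = 1%:M by rewrite det1 mul1r.
apply/matrixP => i j; rewrite !mxE (inj_eq (@lift_inj _ c)) N_row ?subr0 //.
by rewrite eq_sym neq_lift.
Qed.

Lemma totally_unimodular_scale_rows m p (s : 'I_m -> int) (A : 'M[int]_(m, p)) :
  (forall i, s i \in signs) -> totally_unimodular A ->
  totally_unimodular (\matrix_(i, j) (s i * A i j)).
Proof.
move=> s_signs A_tu k f g f_inj g_inj.
have -> : \matrix_(x, y) (\matrix_(i, j) (s i * A i j)) (f x) (g y)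
    = diag_mx (\row_x s (f x)) *m mxsub f g A.
  by rewrite mul_diag_mx; apply/matrixP => x y; rewrite !mxE.
rewrite det_mulmx det_diag; apply: signsM; last exact: A_tu f_inj g_inj.
apply: (big_ind (fun x => x \in signs)) => //; first exact: signsM.
by move=> x _; rewrite mxE.
Qed.

Definition interval_mx m p (h : 'I_m -> nat) (a b : 'I_p -> nat) : 'M[int]_(m, p) :=
  \matrix_(i, j) ((a j <= h i < b j)%N)%:R.

Lemma mxsub_interval_mx m p k l (h : 'I_m -> nat) (a b : 'I_p -> nat)
    (f : 'I_k -> 'I_m) (g : 'I_l -> 'I_p) :
  mxsub f g (interval_mx h a b) = interval_mx (h \o f) (a \o g) (b \o g).
Proof. by apply/matrixP => i j; rewrite !mxE. Qed.

Section IntervalClip.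

Variables (k : nat) (h a b : 'I_k -> nat) (r0 c0 : 'I_k).
Local Notation meets j := (a j <= h r0 < b j)%N.
Hypothesis r0_lowest : forall i, (h r0 <= h i)%N.
Hypothesis c0_meets : meets c0.
Hypothesis c0_shortest : forall j, meets j -> (b c0 <= b j)%N.

Definition clip_start j := if (j != c0) && meets j then b c0 else a j.

Lemma interval_mx_clip :
  interval_mx h a b *m (1%:M - \matrix_(r, c) ((r == c0) && (c != c0) && meets c)%:R)
  = interval_mx h clip_start b.
Proof.
rewrite mulmxBr mulmx1; apply/matrixP => i j; rewrite !mxE.
rewrite (bigD1 c0) //= big1 => [|r /negPf rc0]; last by rewrite !mxE rc0 mulr0.
rewrite !mxE eqxx addr0 /clip_start.
case: ifP => [/andP[_ /andP[a_j b_j]]|_]; last by rewrite mulr0 subr0.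
have /andP[a_c0 b_c0] := c0_meets.
have b_c0_j := c0_shortest (introT andP (conj a_j b_j)).
have r0_i := r0_lowest i.
rewrite mulr1 (leq_trans a_j r0_i) (leq_trans a_c0 r0_i) /=.
by case: (ltnP (h i) (b c0)) => ?; case: (ltnP (h i) (b j)) => ? /=;
  rewrite ?subrr ?subr0 //; lia.
Qed.

Lemma det_interval_mx_clip :
  \det (interval_mx h a b) = \det (interval_mx h clip_start b).
Proof.
rewrite -interval_mx_clip det_mulmx (@det_1_sub_row_supported _ _ c0) ?mulr1 //.
  by move=> i j /negPf ic0; rewrite mxE ic0.
by rewrite mxE eqxx.
Qed.

Lemma interval_mx_clip_row j : interval_mx h clip_start b r0 j = (j == c0)%:R.
Proof.
have /andP[a_c0 b_c0] := c0_meets.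
rewrite mxE /clip_start; case: eqVneq => [->|_] /=; first by rewrite a_c0 b_c0.
by case: ifP => [_|/negPf ->] //; rewrite leqNgt b_c0.
Qed.

End IntervalClip.

Lemma det_interval_mx k (h a b : 'I_k -> nat) : \det (interval_mx h a b) \in signs.
Proof.
elim: k h a b => [|k IH] h a b; first by rewrite det_mx00.
have [r0 _ r0_min] := arg_minnP h (isT : predT ord0).
have [/existsP[j0 j0_meets]|/existsPn no_meet] :=
  boolP [exists j, a j <= h r0 < b j]%N; last first.
  by rewrite (expand_det_row _ r0) big1 // => j _; rewrite mxE (negPf (no_meet j)) mul0r.
have [c0 c0_meets c0_shortest] :=
  @arg_minnP _ j0 (fun j => a j <= h r0 < b j)%N b j0_meets.
rewrite (det_interval_mx_clip (fun i => r0_min i isT) c0_meets c0_shortest).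
rewrite (expand_det_row _ r0) (bigD1 c0) //= big1 => [|j /negPf jc0]; last first.
  by rewrite interval_mx_clip_row // jc0 mul0r.
rewrite interval_mx_clip_row // eqxx mul1r addr0 /cofactor.
apply: signsM; first exact: signs_sign.
have -> : row' r0 (col' c0 (interval_mx h (clip_start h a b r0 c0) b))
    = mxsub (lift r0) (lift c0) (interval_mx h (clip_start h a b r0 c0) b).
  by apply/matrixP => i j; rewrite !mxE.
by rewrite mxsub_interval_mx.
Qed.

Lemma interval_mx_totally_unimodular m p (h : 'I_m -> nat) (a b : 'I_p -> nat) :
  totally_unimodular (interval_mx h a b).
Proof.
move=> k f g _ _; rewrite -[X in \det X]/(mxsub f g _) mxsub_interval_mx.
exact: det_interval_mx.
Qed.

Lemma stacked_cost_matrixE n Kt Kh (ot : 'I_n -> 'I_Kt) (oh : 'I_n -> 'I_Kh)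
    (alpha beta : int) :
  stacked_matrix alpha beta (cost_matrix ot) (cost_matrix oh) =
  \matrix_(x, c) ((if (x < Kt)%N then alpha else if x == Kt :> nat then 1 else beta) *
    interval_mx (fun x : 'I_(Kt + (1 + Kh)) => if (x < Kt)%N then (Kt.-1 - x)%N else x)
                (fun c => (Kt.-1 - ot c)%N) (fun c => (Kt + 2 + oh c)%N) x c).
Proof.
apply/matrixP => x c; rewrite !mxE.
have ot_c := ltn_ord (ot c); have oh_c := ltn_ord (oh c).
case: split_ordP => [j ->|y ->]; rewrite ?col_mxEu ?col_mxEd !mxE /=.
  have j_lt := ltn_ord j.
  have -> : (Kt.-1 - ot c <= Kt.-1 - j < Kt + 2 + oh c)%N = (j <= ot c)%N.
    by apply/idP/idP; lia.
  by case: (j <= ot c)%N; rewrite ?mulr1 ?mulr0.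
case: split_ordP => [z ->|w ->]; rewrite ?col_mxEu ?col_mxEd !mxE /=.
  rewrite ord1 addn0 eqxx mul1r.
  by have -> : (Kt.-1 - ot c <= Kt < Kt + 2 + oh c)%N by lia.
have -> : (Kt + (1 + w) == Kt)%N = false by lia.
have -> : (Kt.-1 - ot c <= Kt + (1 + w) < Kt + 2 + oh c)%N = (w <= oh c)%N.
  by apply/idP/idP; lia.
by case: (w <= oh c)%N; rewrite ?mulr1 ?mulr0.
Qed.

Theorem corollary2 (n Kt Kh : nat) (ot : 'I_n -> 'I_Kt) (oh : 'I_n -> 'I_Kh)
  (alpha beta : int) :
  alpha \in [:: -1; 0; 1] -> beta \in [:: -1; 0; 1] ->
  totally_unimodular
    (stacked_matrix alpha beta (cost_matrix ot) (cost_matrix oh)).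
Proof.
move=> alpha_sign beta_sign; rewrite stacked_cost_matrixE.
apply: totally_unimodular_scale_rows; last exact: interval_mx_totally_unimodular.
by move=> x; case: ifP => _; last case: ifP.
Qed.
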